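(* For every facility placement profile $\mathbf{s}$ and every client $v$ with $N_{\mathbf{s}}(v)\neq\varnothing$, the client $v$ belongs to $V_j$ where $j=\min\{i: F_i\cap N_{\mathbf{s}}(v)\neq\varnothing\}$.
   Context: Setting: a finite directed graph $H=(V,E,w)$ with vertex weights $w:V\to\mathbb{Q}_{>0}$ (vertices are clients), $w(X)=\sum_{v\in X}w(v)$, a finite set $F$ of facility agents, and a facility placement profile $\mathbf{s}=(s_f)_{f\in F}$ with $s_f\in V$. For $v\in V$ let $N(v)=\{v\}\cup\{u:(v,u)\in E\}$, $N_{\mathbf{s}}(v)=\{f\in F:s_f\in N(v)\}$, $A_{\mathbf{s}}(f)=\{v\in V: f\in N_{\mathbf{s}}(v)\}$ and $A_{\mathbf{s}}(T)=\bigcup_{f\in T}A_{\mathbf{s}}(f)$ for $T\subseteq F$. For nonempty $F^*\subseteq F$ and $V^*\subseteq V$, the minimum neighborhood set $\mathrm{MNS}_{\mathbf{s}}(F^*,V^* )$ is the (unique) subset of $F^*$ of largest cardinality among the nonempty $T\subseteq F^*$ minimizing $\frac{w(A_{\mathbf{s}}(T)\cap V^* )}{|T|}$. The class set is defined inductively: for $i\ge1$, while $F\setminus\bigcup_{j<i}F_j\neq\varnothing$, let $F_i=\mathrm{MNS}_{\mathbf{s}}\big(F\setminus\bigcup_{j<i}F_j,\ V\setminus\bigcup_{j<i}V_j\big)$ and $V_i=A_{\mathbf{s}}(F_i)\setminus\bigcup_{j<i}V_j$; the class is $C_i=(F_i,V_i)$. *)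

From HB Require Import structures.
From mathcomp Require Import all_boot all_order all_algebra.
Set Implicit Arguments. Unset Strict Implicit. Unset Printing Implicit Defensive.
Import Order.TTheory GRing.Theory Num.Theory.
Local Open Scope ring_scope.

Section FacilityClasses.
Variables (V F : finType) (E : rel V) (w : V -> rat) (s : F -> V).

Definition Nbr (v : V) : {set V} := [set u | (u == v) || E v u].
Definition Ns (v : V) : {set F} := [set f | s f \in Nbr v].
Definition Af (f : F) : {set V} := [set v | f \in Ns v].
Definition AT (T : {set F}) : {set V} := \bigcup_(f in T) Af f.

Definition wset (X : {set V}) : rat := \sum_(v in X) w v.

Definition ratio (Vs : {set V}) (T : {set F}) : rat :=
  wset (AT T :&: Vs) / #|T|%:R.

Definition isMNS (Fs : {set F}) (Vs : {set V}) (T : {set F}) : bool :=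
  [&& T \subset Fs, T != set0,
      [forall T' : {set F}, ((T' \subset Fs) && (T' != set0)) ==>
                            (ratio Vs T <= ratio Vs T')] &
      [forall T' : {set F},
         [&& T' \subset Fs, T' != set0 & ratio Vs T' == ratio Vs T] ==>
         (#|T'| <= #|T|)%N]].

(* MNS_s(Fs, Vs); the paper shows it is unique. *)
Definition MNS (Fs : {set F}) (Vs : {set V}) : {set F} :=
  odflt set0 [pick T | isMNS Fs Vs T].

Definition nextF (UF : {set F}) (UV : {set V}) : {set F} :=
  if ~: UF == set0 then set0 else MNS (~: UF) (~: UV).

(* used n = (F_1 ∪ ... ∪ F_n, V_1 ∪ ... ∪ V_n) *)
Fixpoint used (n : nat) : {set F} * {set V} :=
  match n with
  | 0 => (set0, set0)
  | n'.+1 =>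
      let UF := (used n').1 in let UV := (used n').2 in
      let Fn := nextF UF UV in
      (UF :|: Fn, UV :|: (AT Fn :\: UV))
  end.

(* F_i and V_i for i >= 1 (index 0 is unused and gives the empty set). *)
Definition classF (i : nat) : {set F} :=
  if i is n.+1 then nextF (used n).1 (used n).2 else set0.
Definition classV (i : nat) : {set V} :=
  if i is n.+1 then AT (classF i) :\: (used n).2 else set0.

End FacilityClasses.

From Pilot Require Import Defs.
From HB Require Import structures.
From mathcomp Require Import all_boot all_order all_algebra.
Set Implicit Arguments. Unset Strict Implicit. Unset Printing Implicit Defensive.
Import Order.TTheory GRing.Theory Num.Theory.
Local Open Scope ring_scope.

(* Each step of the construction takes a nonempty MNS out of the remaining
   facilities, so after |F| steps every facility lies in some class.  For the
   first class F_j meeting N_s(v), v lies in A_s(F_j) but in no earlier V_i,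
   because V_i is contained in A_s(F_i) and F_i misses N_s(v). *)

Section FacilityClasses.
Variables (V F : finType) (E : rel V) (w : V -> rat) (s : F -> V).

Lemma mem_AT (T : {set F}) (v : V) :
  (v \in AT E s T) = (T :&: Ns E s v != set0).
Proof.
rewrite /AT; apply/bigcupP/set0Pn => [[f fT]|[f]]; rewrite /Af inE.
  by move=> fv; exists f; rewrite inE fT.
by case/andP=> fT fv; exists f; rewrite // inE.
Qed.

Lemma isMNS_exists (Fs : {set F}) (Vs : {set V}) :
  Fs != set0 -> exists T, isMNS E w s Fs Vs T.
Proof.
move=> Fs_neq0.
pose candidate (T : {set F}) := (T \subset Fs) && (T != set0).
have Fs_ok : candidate Fs by rewrite /candidate subxx Fs_neq0.
case: (arg_minP (Defs.ratio E w s Vs) Fs_ok) => T1 /andP[T1_sub T1_neq0] T1_min.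
pose same_ratio (T : {set F}) :=
  [&& T \subset Fs, T != set0
    & Defs.ratio E w s Vs T == Defs.ratio E w s Vs T1].
have T1_same : same_ratio T1 by rewrite /same_ratio T1_sub T1_neq0 eqxx.
case: (arg_maxnP (fun T : {set F} => #|T|) T1_same).
move=> T /and3P[T_sub T_neq0 /eqP T_eq] T_max.
exists T; apply/and4P; split=> //; apply/forallP => T'; apply/implyP.
  by rewrite T_eq; apply: T1_min.
case/and3P=> T'_sub T'_neq0 /eqP T'_eq; apply: T_max.
by rewrite /same_ratio T'_sub T'_neq0 T'_eq T_eq eqxx.
Qed.

Lemma MNS_sub (Fs : {set F}) (Vs : {set V}) : MNS E w s Fs Vs \subset Fs.
Proof. by rewrite /MNS; case: pickP => [T /and4P[]|] //= _; apply: sub0set. Qed.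

Lemma MNS_neq0 (Fs : {set F}) (Vs : {set V}) :
  Fs != set0 -> MNS E w s Fs Vs != set0.
Proof.
move=> Fs_neq0; rewrite /MNS; case: pickP => [T /and4P[] //|no_MNS].
by have [T] := isMNS_exists Vs Fs_neq0; rewrite no_MNS.
Qed.

Lemma nextF_subC (UF : {set F}) (UV : {set V}) :
  nextF E w s UF UV \subset ~: UF.
Proof.
by rewrite /nextF; case: ifP => _; [apply: sub0set | apply: MNS_sub].
Qed.

Lemma nextF_neq0 (UF : {set F}) (UV : {set V}) :
  UF != setT -> nextF E w s UF UV != set0.
Proof.
move=> UF_neqT; rewrite /nextF.
case: ifP => [/eqP UFC_eq0 | /negbT]; last exact: MNS_neq0.
by move: UF_neqT; rewrite -(setCK UF) UFC_eq0 setC0 eqxx.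
Qed.

Lemma leq_card_used (n : nat) :
  (used E w s n).1 != setT -> (n <= #|(used E w s n).1|)%N.
Proof.
elim: n => [|n IH] //=; set UF := (used E w s n).1; set UV := (used E w s n).2.
move=> U_neqT; have UF_neqT : UF != setT.
  by apply: contraNneq U_neqT => ->; rewrite setTU.
have /set0Pn [f f_next] := nextF_neq0 UV UF_neqT.
have f_notin : f \notin UF.
  by move/subsetP: (nextF_subC UF UV) => /(_ f f_next); rewrite inE.
apply: leq_ltn_trans (IH UF_neqT) (proper_card (properUl _)).
by apply/subsetPn; exists f.
Qed.

Lemma used_complete : (used E w s #|F|).1 = setT.
Proof.
apply/eqP; rewrite eqEcard subsetT cardsT /=.
have [->|/leq_card_used //] := eqVneq (used E w s #|F|).1 setT.
by rewrite cardsT.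
Qed.

Lemma mem_used_classF (n : nat) (f : F) :
  f \in (used E w s n).1 -> exists2 i, (i < n)%N & f \in classF E w s i.+1.
Proof.
elim: n => [|n IH] /=; first by rewrite inE.
rewrite inE => /orP[/IH [i lt_in f_i] | f_n]; last by exists n.
by exists i => //; apply: ltnW.
Qed.

Lemma mem_used_AT (n : nat) (v : V) :
  v \in (used E w s n).2 ->
  exists2 i, (i < n)%N & v \in AT E s (classF E w s i.+1).
Proof.
elim: n => [|n IH] /=; first by rewrite inE.
rewrite !inE => /orP[/IH [i lt_in v_i] | /andP[_ v_n]]; last by exists n.
by exists i => //; apply: ltnW.
Qed.

Lemma classF_cover (f : F) : exists i, f \in classF E w s i.+1.
Proof.
have : f \in (used E w s #|F|).1 by rewrite used_complete inE.
by case/mem_used_classF => i _ f_i; exists i.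
Qed.

End FacilityClasses.

Theorem mainTheorem7 (V F : finType) (E : rel V) (w : V -> rat)
  (hw : forall v, 0 < w v) (s : F -> V) (v : V) :
  Ns E s v != set0 ->
  exists j : nat,
    [/\ (0 < j)%N,
        classF E w s j :&: Ns E s v != set0,
        (forall i : nat, (0 < i < j)%N -> classF E w s i :&: Ns E s v = set0)
      & v \in classV E w s j].
Proof.
case/set0Pn => f f_v; have [i f_i] := classF_cover E w s f.
pose meets j := (0 < j)%N && (classF E w s j :&: Ns E s v != set0).
have meets_i : meets i.+1 by apply/set0Pn; exists f; rewrite inE f_i.
case: (ex_minnP (ex_intro meets _ meets_i)) => j /andP[j_gt0 meets_j] j_min.
have earlier_miss i' : (0 < i' < j)%N -> classF E w s i' :&: Ns E s v = set0.
  case/andP=> i'_gt0 lt_i'j; apply/eqP; apply: contraTT lt_i'j => meets_i'.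
  by rewrite -leqNgt j_min // /meets i'_gt0.
exists j; split=> //.
case: j j_gt0 meets_j {j_min} earlier_miss => // j _ meets_j earlier_miss.
rewrite /classV inE mem_AT meets_j andbT; apply/negP => /mem_used_AT [k lt_kj].
by rewrite mem_AT earlier_miss ?eqxx.
Qed.
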